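(* Let $(X,\le)$ be a non-empty strictly inductive poset, $f:X\to X$ and $a_0\in X$ with $a_0\le f(a_0)$. Let $W$ be the set of elements of $X$ that are the least upper bound of some $a_0$-chain, and let $N$ be the smallest subset of $X$ containing $a_0$, closed under $f$, and closed under non-empty least upper bounds. If $f$ is monotone on $W$ (i.e. $f(x)\le f(y)$ for all $x,y\in W$ with $x\le y$), then $N\subseteq W$.
   Context: A poset is strictly inductive if every non-empty chain has a least upper bound $\mathrm{lub}$ in $X$. A set $Z\subseteq X$ is closed under $f$ if $f(z)\in Z$ for all $z\in Z$, and closed under non-empty least upper bounds if for every non-empty $P\subseteq Z$, $\mathrm{lub}(P)$ exists and belongs to $Z$. A subset $C\subseteq X$ is an $a_0$-chain (with respect to $f$) if: $C$ is well ordered by $\le$; $a_0$ is the least element of $C$; $C$ is closed under non-empty least upper bounds; and for every $z\in C\setminus\{\mathrm{lub}(C)\}$ we have $f(z)\in C$, $z<f(z)$, and there is no $y\in C$ with $z<y<f(z)$. *)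

(* a poset is a carrier type T with a relation le,
   partial-order axioms given as explicit hypotheses of the theorem.
   Subsets of T are predicates T -> Prop. *)

Section Defs.
Context {T : Type} (le : T -> T -> Prop).

Definition lt (x y : T) : Prop := le x y /\ x <> y.

Definition is_ub (P : T -> Prop) (x : T) : Prop := forall y, P y -> le y x.

Definition is_lub (P : T -> Prop) (x : T) : Prop :=
  is_ub P x /\ (forall z, is_ub P z -> le x z).

Definition nonempty (P : T -> Prop) : Prop := exists x, P x.

Definition subset (P Q : T -> Prop) : Prop := forall x, P x -> Q x.

Definition is_chain (P : T -> Prop) : Prop :=
  forall x y, P x -> P y -> le x y \/ le y x.

Definition strictly_inductive : Prop :=
  forall P, nonempty P -> is_chain P -> exists x, is_lub P x.

Definition closed_under (f : T -> T) (Z : T -> Prop) : Prop :=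
  forall z, Z z -> Z (f z).

Definition closed_under_lubs (Z : T -> Prop) : Prop :=
  forall P, nonempty P -> subset P Z -> exists l, is_lub P l /\ Z l.

Definition well_ordered (C : T -> Prop) : Prop :=
  forall P, nonempty P -> subset P C -> exists m, P m /\ forall y, P y -> le m y.

Definition a0_chain (f : T -> T) (a0 : T) (C : T -> Prop) : Prop :=
  well_ordered C /\
  (C a0 /\ forall c, C c -> le a0 c) /\
  closed_under_lubs C /\
  (forall z, C z -> ~ is_lub C z ->
     C (f z) /\ lt z (f z) /\ ~ (exists y, C y /\ lt z y /\ lt y (f z))).

Definition Wset (f : T -> T) (a0 : T) (x : T) : Prop :=
  exists C, a0_chain f a0 C /\ is_lub C x.

Definition smallest_closed (f : T -> T) (a0 : T) (N : T -> Prop) : Prop :=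
  (N a0 /\ closed_under f N /\ closed_under_lubs N) /\
  (forall Z, Z a0 -> closed_under f Z -> closed_under_lubs Z -> subset N Z).

End Defs.

From Pilot Require Import Defs.
From Stdlib Require Import Classical.

(* Any two a0-chains are comparable, one being an initial segment of the
   other: an element of an a0-chain is determined by the set of its strict
   predecessors, being a0 when that set is empty and otherwise either its lub
   or the image under f of its lub.  Consequently W contains a0, is closed
   under f (the chain with lub x is topped by f x, and x <= f x follows from
   monotonicity of f on W), and is closed under non-empty lubs (the union of
   the chains realising the elements of a set P, topped by its lub, is again
   an a0-chain). *)

Section Chains.
Variables (T : Type) (le : T -> T -> Prop).
Hypothesis le_refl : forall x, le x x.
Hypothesis le_antisym : forall x y, le x y -> le y x -> x = y.
Hypothesis le_trans : forall x y z, le x y -> le y z -> le x z.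

Local Notation lt := (Defs.lt le).
Local Notation is_ub := (Defs.is_ub le).
Local Notation is_lub := (Defs.is_lub le).
Local Notation is_chain := (Defs.is_chain le).
Local Notation well_ordered := (Defs.well_ordered le).

Definition below (C : T -> Prop) (c x : T) : Prop := C x /\ lt x c.

Definition add_top (C : T -> Prop) (t x : T) : Prop := C x \/ x = t.

Definition initial_segment (C D : T -> Prop) : Prop :=
  subset C D /\ forall c d, C c -> D d -> le d c -> C d.

Definition bigcup (F : (T -> Prop) -> Prop) (x : T) : Prop :=
  exists C, F C /\ C x.

Lemma lt_trans x y z : lt x y -> lt y z -> lt x z.
Proof.
  intros [Hxy Hne] [Hyz _]. split; [eauto|].
  intros ->. apply Hne, le_antisym; assumption.
Qed.

Lemma lub_unique P x y : is_lub P x -> is_lub P y -> x = y.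
Proof. intros [Hx1 Hx2] [Hy1 Hy2]. apply le_antisym; auto. Qed.

Lemma is_lub_iff P Q l : (forall x, P x <-> Q x) -> is_lub P l -> is_lub Q l.
Proof.
  intros HPQ [Hub Hleast]. split.
  - intros y Hy. apply Hub, HPQ, Hy.
  - intros z Hz. apply Hleast. intros y Hy. apply Hz, HPQ, Hy.
Qed.

Lemma lt_not_is_lub P x z : P z -> lt x z -> ~ is_lub P x.
Proof. intros Hz [Hxz Hne] [Hub _]. apply Hne, le_antisym; auto. Qed.

Lemma well_ordered_chain C : well_ordered C -> is_chain C.
Proof.
  intros HC x y Hx Hy.
  destruct (HC (fun z => z = x \/ z = y)) as [m [Hm Hmin]].
  - exists x; auto.
  - intros z [-> | ->]; auto.
  - destruct Hm as [-> | ->]; [left | right]; apply Hmin; auto.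
Qed.

Lemma well_ordered_subset C D : well_ordered C -> subset D C -> well_ordered D.
Proof. intros HC HDC P HP HPD. apply HC; [exact HP|]. intros x Hx. apply HDC, HPD, Hx. Qed.

Lemma well_ordered_ind C (P : T -> Prop) : well_ordered C ->
  (forall c, C c -> (forall x, C x -> lt x c -> P x) -> P c) ->
  forall c, C c -> P c.
Proof.
  intros HC Hstep c Hc. apply NNPP. intros HPc.
  destruct (HC (fun x => C x /\ ~ P x)) as [m [[Hm HPm] Hmin]].
  - exists c; auto.
  - intros x [Hx _]; exact Hx.
  - apply HPm, Hstep; [exact Hm|]. intros x Hx [Hxm Hne]. apply NNPP. intros HPx.
    apply Hne, le_antisym; [exact Hxm | apply Hmin; auto].
Qed.

Variables (f : T -> T) (a0 : T).

Local Notation a0_chain := (Defs.a0_chain le f a0).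
Local Notation W := (Wset le f a0).

Lemma a0_chain_well_ordered C : a0_chain C -> well_ordered C.
Proof. intros [H _]. exact H. Qed.

Lemma a0_chain_is_chain C : a0_chain C -> is_chain C.
Proof. intros HC. apply well_ordered_chain, a0_chain_well_ordered, HC. Qed.

Lemma a0_chain_a0 C : a0_chain C -> C a0.
Proof. intros [_ [[H _] _]]. exact H. Qed.

Lemma a0_chain_ge_a0 C : a0_chain C -> forall c, C c -> le a0 c.
Proof. intros [_ [[_ H] _]]. exact H. Qed.

Lemma a0_chain_lubs C : a0_chain C -> closed_under_lubs le C.
Proof. intros [_ [_ [H _]]]. exact H. Qed.

Lemma a0_chain_succ C : a0_chain C -> forall z, C z -> ~ is_lub C z ->
  C (f z) /\ lt z (f z) /\ ~ (exists y, C y /\ lt z y /\ lt y (f z)).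
Proof. intros [_ [_ [_ H]]]. exact H. Qed.

Lemma a0_chain_lub_mem C x : a0_chain C -> is_lub C x -> C x.
Proof.
  intros HC Hx. destruct (a0_chain_lubs C HC C) as [l [Hl HCl]].
  - exists a0. apply a0_chain_a0, HC.
  - intros z Hz; exact Hz.
  - rewrite (lub_unique C x l Hx Hl). exact HCl.
Qed.

Lemma a0_chain_succ_lt C x z : a0_chain C -> C x -> C z -> lt x z ->
  C (f x) /\ lt x (f x) /\ le (f x) z.
Proof.
  intros HC Hx Hz Hxz.
  destruct (a0_chain_succ C HC x Hx (lt_not_is_lub C x z Hz Hxz)) as [Hfx [Hlt Hgap]].
  split; [exact Hfx|]. split; [exact Hlt|].
  destruct (a0_chain_is_chain C HC z (f x) Hz Hfx) as [Hzf | Hfz]; [|exact Hfz].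
  destruct (classic (z = f x)) as [<- | Hne]; [apply le_refl|].
  exfalso. apply Hgap. exists z. split; [exact Hz|]. split; [exact Hxz | split; assumption].
Qed.

Lemma a0_chain_below_empty_eq C c : a0_chain C -> C c -> ~ nonempty (below C c) -> c = a0.
Proof.
  intros HC Hc Hempty. apply NNPP. intros Hne. apply Hempty. exists a0.
  split; [apply a0_chain_a0, HC|]. split; [apply (a0_chain_ge_a0 C HC c Hc)|].
  intros Heq. apply Hne. symmetry. exact Heq.
Qed.

Lemma a0_chain_below_lub C c l : a0_chain C -> C c -> is_lub (below C c) l -> C l ->
  (lt l c -> c = f l) /\ (~ lt l c -> c = l).
Proof.
  intros HC Hc Hl HCl.
  assert (Hlc : le l c) by (apply (proj2 Hl); intros y [_ [Hyc _]]; exact Hyc).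
  split.
  - intros Hlt. destruct (a0_chain_succ_lt C l c HC HCl Hc Hlt) as [Hfl [[Hlf Hne] Hflc]].
    apply NNPP. intros Hcf. apply Hne, le_antisym; [exact Hlf|].
    apply (proj1 Hl). split; [exact Hfl|]. split; [exact Hflc|].
    intros Heq. apply Hcf. symmetry. exact Heq.
  - intros Hnlt. apply NNPP. intros Hcl. apply Hnlt. split; [exact Hlc|].
    intros Heq. apply Hcl. symmetry. exact Heq.
Qed.

Lemma a0_chain_eq_of_below C D c d : a0_chain C -> a0_chain D -> C c -> D d ->
  (forall x, below C c x <-> below D d x) -> c = d.
Proof.
  intros HC HD Hc Hd Hbelow.
  destruct (classic (nonempty (below C c))) as [Hne | Hempty].
  - destruct (a0_chain_lubs C HC (below C c) Hne) as [l [Hl HCl]].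
    { intros x [Hx _]; exact Hx. }
    destruct (a0_chain_lubs D HD (below C c) Hne) as [l' [Hl' HDl]].
    { intros x Hx. apply Hbelow in Hx. apply Hx. }
    rewrite <- (lub_unique _ _ _ Hl Hl') in HDl.
    destruct (a0_chain_below_lub C c l HC Hc Hl HCl) as [Hsucc Hlim].
    destruct (a0_chain_below_lub D d l HD Hd (is_lub_iff _ _ _ Hbelow Hl) HDl)
      as [Hsucc' Hlim'].
    assert (Hlt : lt l c <-> lt l d).
    { split; intros H.
      - apply (proj1 (Hbelow l) (conj HCl H)).
      - apply (proj2 (Hbelow l) (conj HDl H)). }
    destruct (classic (lt l c)) as [H | H].
    + rewrite (Hsucc H), (Hsucc' (proj1 Hlt H)). reflexivity.
    + rewrite (Hlim H), (Hlim' (fun H' => H (proj2 Hlt H'))). reflexivity.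
  - assert (Hempty' : ~ nonempty (below D d)).
    { intros [x Hx]. apply Hempty. exists x. apply Hbelow, Hx. }
    rewrite (a0_chain_below_empty_eq C c HC Hc Hempty), (a0_chain_below_empty_eq D d HD Hd Hempty').
    reflexivity.
Qed.

Lemma a0_chain_cases C D : a0_chain C -> a0_chain D -> forall c, C c ->
  (D c /\ forall x, below C c x <-> below D c x) \/ subset D (below C c).
Proof.
  intros HC HD. apply (well_ordered_ind C); [apply a0_chain_well_ordered, HC|].
  intros c Hc IH.
  destruct (classic (exists x, below C c x /\ subset D (below C x)))
    as [[x [[Hx Hxc] HDx]] | Hno].
  { right. intros y Hy. destruct (HDx y Hy) as [HCy Hyx].
    split; [exact HCy | exact (lt_trans _ _ _ Hyx Hxc)]. }
  assert (Hagree : forall x, below C c x -> D x /\ forall y, below C x y <-> below D x y).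
  { intros x [Hx Hxc]. destruct (IH x Hx Hxc) as [H | H]; [exact H|].
    exfalso. apply Hno. exists x. split; [split|]; assumption. }
  destruct (classic (subset D (below C c))) as [Hsub | Hnsub]; [right; exact Hsub|].
  left.
  destruct (a0_chain_well_ordered D HD (fun y => D y /\ ~ below C c y))
    as [d [[Hd Hdc] Hdmin]].
  { apply not_all_ex_not in Hnsub as [y Hy]. apply imply_to_and in Hy. exists y. exact Hy. }
  { intros y [Hy _]; exact Hy. }
  assert (Hbelow : forall x, below C c x <-> below D d x).
  { intros x. split.
    - intros Hxc. destruct (Hagree x Hxc) as [HDx Hxagree]. split; [exact HDx|].
      destruct (a0_chain_is_chain D HD x d HDx Hd) as [Hxd | Hdx].
      + split; [exact Hxd|]. intros ->. exact (Hdc Hxc).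
      + exfalso. destruct (classic (d = x)) as [-> | Hne]; [exact (Hdc Hxc)|].
        destruct (proj2 (Hxagree d) (conj Hd (conj Hdx Hne))) as [HCd Hdx'].
        apply Hdc. split; [exact HCd | exact (lt_trans _ _ _ Hdx' (proj2 Hxc))].
    - intros [HDx [Hxd Hne]]. apply NNPP. intros Hxc.
      apply Hne, le_antisym; [exact Hxd | apply Hdmin; auto]. }
  pose proof (a0_chain_eq_of_below C D c d HC HD Hc Hd Hbelow). subst d.
  split; assumption.
Qed.

Lemma a0_chain_initial_segment_total C D : a0_chain C -> a0_chain D ->
  initial_segment C D \/ initial_segment D C.
Proof.
  intros HC HD.
  destruct (classic (exists c, C c /\ subset D (below C c))) as [[c [Hc HDc]] | Hno].
  - right. split.
    + intros d Hd. exact (proj1 (HDc d Hd)).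
    + intros d c' Hd Hc' Hc'd.
      destruct (a0_chain_cases C D HC HD c' Hc') as [[HDc' _] | HDc']; [exact HDc'|].
      exfalso. destruct (HDc' d Hd) as [_ [Hdc' Hne]]. apply Hne, le_antisym; assumption.
  - left.
    assert (Hagree : forall c, C c -> D c /\ forall x, below C c x <-> below D c x).
    { intros c Hc. destruct (a0_chain_cases C D HC HD c Hc) as [H | H]; [exact H|].
      exfalso. eauto. }
    split.
    + intros c Hc. apply Hagree, Hc.
    + intros c d Hc Hd Hdc. destruct (classic (d = c)) as [-> | Hne]; [exact Hc|].
      apply (proj2 (proj2 (Hagree c Hc) d) (conj Hd (conj Hdc Hne))).
Qed.

Lemma W_of_add_top C t :
  well_ordered C -> C a0 -> (forall c, C c -> le a0 c) -> is_ub C t ->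
  (forall Q, nonempty Q -> subset Q C -> exists q, is_lub Q q /\ add_top C t q) ->
  (forall z, C z -> z <> t ->
     add_top C t (f z) /\ lt z (f z) /\ ~ (exists y, C y /\ lt z y /\ lt y (f z))) ->
  W t.
Proof.
  intros Hwo Ha0 Hge Hub Hlubs Hsucc.
  assert (Htop : is_lub (add_top C t) t).
  { split.
    - intros y [Hy | ->]; [apply Hub, Hy | apply le_refl].
    - intros u Hu. apply Hu. right. reflexivity. }
  exists (add_top C t). split; [|exact Htop].
  split; [|split; [|split]].
  - intros P HP HPsub.
    destruct (classic (exists y, P y /\ C y)) as [[y Hy] | Hno].
    + destruct (Hwo (fun x => P x /\ C x)) as [m [[HPm HCm] Hm]].
      { exists y. exact Hy. }
      { intros x [_ Hx]. exact Hx. }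
      exists m. split; [exact HPm|]. intros z HPz.
      destruct (HPsub z HPz) as [HCz | ->]; [apply Hm; split; assumption | apply Hub, HCm].
    + destruct HP as [y HPy]. exists y. split; [exact HPy|].
      assert (Ht : forall z, P z -> z = t).
      { intros z Hz. destruct (HPsub z Hz) as [HCz | Hzt]; [exfalso; eauto | exact Hzt]. }
      intros z Hz. rewrite (Ht y HPy), (Ht z Hz). apply le_refl.
  - split; [left; exact Ha0|].
    intros c [Hc | ->]; [apply Hge, Hc | apply Hub, Ha0].
  - intros P HP HPsub. destruct (classic (P t)) as [HPt | HPt].
    + exists t. split; [|right; reflexivity]. split.
      * intros y Hy. apply (proj1 Htop), HPsub, Hy.
      * intros u Hu. apply Hu, HPt.
    + apply Hlubs; [exact HP|].
      intros y Hy. destruct (HPsub y Hy) as [HCy | ->]; [exact HCy | contradiction].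
  - intros z Hz Hnl.
    assert (Hzt : z <> t) by (intros ->; exact (Hnl Htop)).
    destruct Hz as [HCz | Hzt']; [|contradiction].
    destruct (Hsucc z HCz Hzt) as [Hfz [Hlt Hgap]].
    split; [exact Hfz|]. split; [exact Hlt|].
    intros [y [[HCy | ->] [Hzy Hyf]]]; [apply Hgap; eauto|].
    destruct Hyf as [Htf Hne]. apply Hne, le_antisym; [exact Htf|].
    apply (proj1 Htop), Hfz.
Qed.

Lemma W_a0 : W a0.
Proof.
  apply (W_of_add_top (fun x => x = a0)).
  - intros P [y Hy] HP. exists y. split; [exact Hy|].
    intros z Hz. rewrite (HP y Hy), (HP z Hz). apply le_refl.
  - reflexivity.
  - intros c ->. apply le_refl.
  - intros c ->. apply le_refl.
  - intros Q [y Hy] HQ. exists a0. split; [|right; reflexivity]. split.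
    + intros z Hz. rewrite (HQ z Hz). apply le_refl.
    + intros u Hu. rewrite <- (HQ y Hy). apply Hu, Hy.
  - intros z -> Hne. contradiction.
Qed.

Lemma W_of_a0_chain_mem C z : a0_chain C -> C z -> W z.
Proof.
  intros HC Hz. destruct (classic (z = a0)) as [-> | Hza0]; [exact W_a0|].
  apply (W_of_add_top (below C z)).
  - apply (well_ordered_subset C); [apply a0_chain_well_ordered, HC|].
    intros x [Hx _]. exact Hx.
  - split; [apply a0_chain_a0, HC|]. split; [apply (a0_chain_ge_a0 C HC z Hz)|].
    intros Heq. apply Hza0. symmetry. exact Heq.
  - intros c [Hc _]. apply (a0_chain_ge_a0 C HC c Hc).
  - intros x [_ [Hxz _]]. exact Hxz.
  - intros Q HQ HQsub. destruct (a0_chain_lubs C HC Q HQ) as [q [Hq HCq]].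
    { intros x Hx. apply HQsub, Hx. }
    exists q. split; [exact Hq|].
    destruct (classic (q = z)) as [-> | Hqz]; [right; reflexivity|].
    left. split; [exact HCq|]. split; [|exact Hqz].
    apply (proj2 Hq). intros x Hx. apply HQsub, Hx.
  - intros x [Hx Hxz] _.
    destruct (a0_chain_succ C HC x Hx (lt_not_is_lub C x z Hz Hxz)) as [_ [_ Hgap]].
    destruct (a0_chain_succ_lt C x z HC Hx Hz Hxz) as [Hfx [Hlt Hfz]].
    split; [|split; [exact Hlt|]].
    + destruct (classic (f x = z)) as [-> | Hne]; [right; reflexivity|].
      left. split; [exact Hfx | split; assumption].
    + intros [y [[Hy _] Hbetween]]. apply Hgap. exists y. split; assumption.
Qed.

Section Monotone.
Hypothesis Ha0 : le a0 (f a0).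
Hypothesis Hmono : forall x y, W x -> W y -> le x y -> le (f x) (f y).

Lemma W_le_f x : W x -> le x (f x).
Proof.
  intros Wx. pose proof Wx as [C [HC Hx]].
  pose proof (a0_chain_lub_mem C x HC Hx) as HCx.
  destruct (classic (nonempty (below C x))) as [Hne | Hempty].
  2: { rewrite (a0_chain_below_empty_eq C x HC HCx Hempty). exact Ha0. }
  destruct (a0_chain_lubs C HC (below C x) Hne) as [l [Hl HCl]].
  { intros y [Hy _]. exact Hy. }
  assert (Hlx : le l x) by (apply (proj2 Hl); intros y [_ [Hyx _]]; exact Hyx).
  destruct (a0_chain_below_lub C x l HC HCx Hl HCl) as [Hsucc Hlim].
  destruct (classic (lt l x)) as [Hlt | Hnlt].
  - rewrite (Hsucc Hlt) at 1.
    apply Hmono; [apply (W_of_a0_chain_mem C l HC HCl) | exact Wx | exact Hlx].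
  - rewrite (Hlim Hnlt) at 1. apply (proj2 Hl). intros y [Hy Hyx].
    destruct (a0_chain_succ_lt C y x HC Hy HCx Hyx) as [_ [[Hyf _] _]].
    apply le_trans with (f y); [exact Hyf|].
    apply Hmono; [apply (W_of_a0_chain_mem C y HC Hy) | exact Wx | apply Hyx].
Qed.

Lemma W_f x : W x -> W (f x).
Proof.
  intros Wx. pose proof Wx as [C [HC Hx]].
  pose proof (W_le_f x Wx) as Hxfx.
  apply (W_of_add_top C).
  - apply a0_chain_well_ordered, HC.
  - apply a0_chain_a0, HC.
  - apply a0_chain_ge_a0, HC.
  - intros y Hy. apply le_trans with x; [apply (proj1 Hx), Hy | exact Hxfx].
  - intros Q HQ HQsub. destruct (a0_chain_lubs C HC Q HQ HQsub) as [q [Hq HCq]].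
    exists q. split; [exact Hq | left; exact HCq].
  - intros z Hz Hzf. destruct (classic (z = x)) as [-> | Hzx].
    + split; [right; reflexivity|]. split; [split; assumption|].
      intros [y [Hy [[Hxy Hne] _]]]. apply Hne, le_antisym; [exact Hxy | apply (proj1 Hx), Hy].
    + assert (Hnl : ~ is_lub C z) by (intros Hz'; apply Hzx, (lub_unique C); assumption).
      destruct (a0_chain_succ C HC z Hz Hnl) as [Hfz Hrest].
      split; [left; exact Hfz | exact Hrest].
Qed.

End Monotone.

Section Union.
Variable F : (T -> Prop) -> Prop.
Hypothesis F_a0_chain : forall C, F C -> a0_chain C.

Lemma bigcup_common x y : bigcup F x -> bigcup F y -> exists E, F E /\ E x /\ E y.
Proof.
  intros [C [HFC Hx]] [D [HFD Hy]].
  destruct (a0_chain_initial_segment_total C D (F_a0_chain C HFC) (F_a0_chain D HFD))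
    as [[HCD _] | [HDC _]].
  - exists D. auto.
  - exists C. auto.
Qed.

Lemma bigcup_initial C c y : F C -> C c -> bigcup F y -> le y c -> C y.
Proof.
  intros HFC Hc [D [HFD Hy]] Hyc.
  destruct (a0_chain_initial_segment_total C D (F_a0_chain C HFC) (F_a0_chain D HFD))
    as [[_ Hdown] | [HDC _]].
  - exact (Hdown c y Hc Hy Hyc).
  - exact (HDC y Hy).
Qed.

Lemma bigcup_chain : is_chain (bigcup F).
Proof.
  intros x y Hx Hy. destruct (bigcup_common x y Hx Hy) as [E [HFE [Ex Ey]]].
  exact (a0_chain_is_chain E (F_a0_chain E HFE) x y Ex Ey).
Qed.

Lemma bigcup_well_ordered : well_ordered (bigcup F).
Proof.
  intros Q [y HQy] HQ. destruct (HQ y HQy) as [C [HFC HCy]].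
  destruct (a0_chain_well_ordered C (F_a0_chain C HFC) (fun x => Q x /\ C x))
    as [m [[HQm HCm] Hm]].
  { exists y. split; assumption. }
  { intros x [_ Hx]. exact Hx. }
  exists m. split; [exact HQm|]. intros z HQz.
  destruct (bigcup_chain m z (HQ m HQm) (HQ z HQz)) as [Hmz | Hzm]; [exact Hmz|].
  apply Hm. split; [exact HQz|]. exact (bigcup_initial C m z HFC HCm (HQ z HQz) Hzm).
Qed.

Lemma bigcup_lub_mem Q q x : nonempty Q -> subset Q (bigcup F) -> is_lub Q q ->
  bigcup F x -> ~ le x q -> bigcup F q.
Proof.
  intros HQ HQsub Hq Hx Hxq. pose proof Hx as [C [HFC HCx]].
  assert (HQC : subset Q C).
  { intros y Hy. apply (bigcup_initial C x y HFC HCx (HQsub y Hy)).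
    destruct (bigcup_chain y x (HQsub y Hy) Hx) as [Hyx | Hxy]; [exact Hyx|].
    exfalso. apply Hxq, le_trans with y; [exact Hxy | apply (proj1 Hq), Hy]. }
  destruct (a0_chain_lubs C (F_a0_chain C HFC) Q HQ HQC) as [q' [Hq' HCq']].
  rewrite (lub_unique Q q q' Hq Hq'). exists C. auto.
Qed.

Lemma bigcup_succ z x : bigcup F z -> bigcup F x -> ~ le x z ->
  bigcup F (f z) /\ lt z (f z) /\ ~ (exists y, bigcup F y /\ lt z y /\ lt y (f z)).
Proof.
  intros Hz Hx Hxz. destruct (bigcup_common z x Hz Hx) as [E [HFE [HEz HEx]]].
  assert (Hnl : ~ is_lub E z) by (intros [Hub _]; apply Hxz, Hub, HEx).
  destruct (a0_chain_succ E (F_a0_chain E HFE) z HEz Hnl) as [Hfz [Hlt Hgap]].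
  split; [exists E; auto|]. split; [exact Hlt|].
  intros [y [Hy [Hzy Hyf]]]. apply Hgap. exists y. split; [|auto].
  exact (bigcup_initial E (f z) y HFE Hfz Hy (proj1 Hyf)).
Qed.

End Union.

Hypothesis Hind : strictly_inductive le.

Lemma W_closed_under_lubs : closed_under_lubs le W.
Proof.
  intros P HP HPW.
  set (F := fun C => a0_chain C /\ exists p, P p /\ is_lub C p).
  assert (HF : forall C, F C -> a0_chain C) by (intros C [HC _]; exact HC).
  set (U := bigcup F).
  assert (HU : forall C p, a0_chain C -> P p -> is_lub C p -> subset C U).
  { intros C p HC Hp Hl x Hx. exists C. split; [split; [exact HC | exists p; auto] | exact Hx]. }
  assert (HUa0 : U a0).
  { destruct HP as [p Hp]. destruct (HPW p Hp) as [C [HC Hl]].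
    apply (HU C p HC Hp Hl), a0_chain_a0, HC. }
  destruct (Hind U (ex_intro _ a0 HUa0) (bigcup_chain F HF)) as [l Hl].
  exists l. split.
  - split.
    + intros p Hp. destruct (HPW p Hp) as [C [HC Hp']].
      apply (proj1 Hl), (HU C p HC Hp Hp'), (a0_chain_lub_mem C p HC Hp').
    + intros u Hu. apply (proj2 Hl). intros x [C [[HC [p [Hp HCp]]] Hx]].
      apply le_trans with p; [apply (proj1 HCp), Hx | apply Hu, Hp].
  - apply (W_of_add_top U).
    + apply bigcup_well_ordered, HF.
    + exact HUa0.
    + intros c [C [[HC _] Hc]]. apply (a0_chain_ge_a0 C HC c Hc).
    + exact (proj1 Hl).
    + intros Q HQ HQU.
      assert (HQchain : is_chain Q).
      { intros x y Hx Hy. apply (bigcup_chain F HF); apply HQU; assumption. }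
      destruct (Hind Q HQ HQchain) as [q Hq]. exists q. split; [exact Hq|].
      destruct (classic (is_ub U q)) as [Hub | Hnub].
      * right. apply le_antisym; [|apply (proj2 Hl), Hub].
        apply (proj2 Hq). intros y Hy. apply (proj1 Hl), HQU, Hy.
      * left. apply not_all_ex_not in Hnub as [x Hx].
        apply imply_to_and in Hx as [HUx Hxq].
        exact (bigcup_lub_mem F HF Q q x HQ HQU Hq HUx Hxq).
    + intros z HUz Hzl.
      assert (Hx : exists x, U x /\ ~ le x z).
      { apply NNPP. intros Hno. apply Hzl, le_antisym; [apply (proj1 Hl), HUz|].
        apply (proj2 Hl). intros x Hx. apply NNPP. intros Hxz. apply Hno. eauto. }
      destruct Hx as [x [HUx Hxz]].
      destruct (bigcup_succ F HF z x HUz HUx Hxz) as [Hfz Hrest].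
      split; [left; exact Hfz | exact Hrest].
Qed.

End Chains.

Theorem mainTheorem5 (T : Type) (le : T -> T -> Prop)
  (le_refl : forall x, le x x)
  (le_antisym : forall x y, le x y -> le y x -> x = y)
  (le_trans : forall x y z, le x y -> le y z -> le x z)
  (X_nonempty : inhabited T)
  (Hind : strictly_inductive le)
  (f : T -> T) (a0 : T) (Ha0 : le a0 (f a0))
  (N : T -> Prop) (HN : smallest_closed le f a0 N)
  (Hmono : forall x y, Wset le f a0 x -> Wset le f a0 y -> le x y -> le (f x) (f y)) :
  subset N (Wset le f a0).
Proof.
  destruct HN as [_ HNmin]. apply HNmin.
  - apply W_a0; assumption.
  - intros x Hx. eapply W_f; eassumption.
  - eapply W_closed_under_lubs; eassumption.
Qed.
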